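(* For any $n\ge2$ and any tropical curve $\Gamma$, the tropical rational function semifield $\overline{\boldsymbol{T}(X_1,\ldots,X_n)}$ is not isomorphic to $\operatorname{Rat}(\Gamma)$ as a $\boldsymbol{T}$-algebra.
   Context: $\boldsymbol{T}=\mathbb{R}\cup\{-\infty\}$ with $a\oplus b=\max\{a,b\}$, $a\odot b=a+b$. $\overline{\boldsymbol{T}[X_1,\ldots,X_n]}$ is the tropical polynomial semiring modulo identifying polynomials defining the same function $\boldsymbol{T}^n\to\boldsymbol{T}$; it is cancellative and $\overline{\boldsymbol{T}(X_1,\ldots,X_n)}$ is its semifield of fractions. $\boldsymbol{T}$-algebras are semirings with a semiring homomorphism from $\boldsymbol{T}$; an isomorphism is a bijective compatible semiring homomorphism. A tropical curve is the metric space obtained from a finite connected multigraph with edge lengths in $\mathbb{R}_{>0}\cup\{\infty\}$ ($\infty$ only on leaf edges, whose leaf end becomes a point at infinity) by identifying each edge with a closed interval of that length. A rational function on $\Gamma$ is the constant $-\infty$ or a continuous piecewise affine function $\Gamma\to\mathbb{R}\cup\{\pm\infty\}$ with integer slopes and finitely many pieces, taking $\pm\infty$ only at points at infinity. $\operatorname{Rat}(\Gamma)$, with pointwise max and sum, is a $\boldsymbol{T}$-algebra via constants. *)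

From Stdlib Require Import Reals ZArith.
From mathcomp Require Import ssreflect ssrfun ssrbool eqtype ssrnat seq choice fintype fingraph.

Set Implicit Arguments.
Unset Strict Implicit.
Unset Printing Implicit Defensive.

(* The tropical semifield T = R u {-oo}, with None = -oo.              *)
Definition T := option R.

Definition tadd (a b : T) : T :=
  match a, b with
  | None, _ => b
  | _, None => a
  | Some x, Some y => Some (Rmax x y)
  end.

Definition tmul (a b : T) : T :=
  match a, b with
  | Some x, Some y => Some (x + y)%R
  | _, _ => None
  end.

(* tropical power a^k (a^0 = 1 = 0 for every a, including -oo) *)
Definition tpow (a : T) (k : nat) : T :=
  match k with
  | 0 => Some 0%R
  | _ => match a with None => None | Some x => Some (INR k * x)%R end
  end.

(* Generic T-algebras presented as setoids: a carrier, a predicate of  *)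
(* admissible elements, an equality (equivalence) on them, the two     *)
(* operations and the structure map T -> A.                           *)
Record Talg := {
  car : Type;
  ok  : car -> Prop;
  eqv : car -> car -> Prop;
  alg_add : car -> car -> car;
  alg_mul : car -> car -> car;
  alg_cst : T -> car
}.

(* Preservation of 0 and 1 follows
   from compatibility with T (0 = cst(-oo), 1 = cst(0)). *)
Definition Talg_iso (A B : Talg) : Prop :=
  exists phi : car A -> car B,
    (forall x, @ok A x -> @ok B (phi x)) /\
    (forall x y, @ok A x -> @ok A y -> (@eqv A x y <-> @eqv B (phi x) (phi y))) /\
    (forall y, @ok B y -> exists x, @ok A x /\ @eqv B (phi x) y) /\
    (forall x y, @ok A x -> @ok A y ->
       @eqv B (phi (@alg_add A x y)) (@alg_add B (phi x) (phi y))) /\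
    (forall x y, @ok A x -> @ok A y ->
       @eqv B (phi (@alg_mul A x y)) (@alg_mul B (phi x) (phi y))) /\
    (forall t, @eqv B (phi (@alg_cst A t)) (@alg_cst B t)).

(* a monomial  c (.) X^alpha  *)
Definition monom (n : nat) := (T * ('I_n -> nat))%type.
Definition tpoly (n : nat) := seq (monom n).

Definition meval n (m : monom n) (x : 'I_n -> T) : T :=
  foldr (fun j acc => tmul (tpow (x j) (m.2 j)) acc) m.1 (enum 'I_n).

Definition peval n (p : tpoly n) (x : 'I_n -> T) : T :=
  foldr (fun m acc => tadd (meval m x) acc) None p.

Definition padd n (p q : tpoly n) : tpoly n := p ++ q.
Definition pmul n (p q : tpoly n) : tpoly n :=
  [seq (tmul m.1 m'.1, fun j => (m.2 j + m'.2 j)%N) | m <- p, m' <- q].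

(* elements of the fraction semifield: pairs f / g with g <> -oo in
   the quotient T[X]/~ (i.e. g does not define the constant -oo). *)
Definition frac (n : nat) := (tpoly n * tpoly n)%type.
Definition frac_ok n (f : frac n) : Prop :=
  ~ (forall x, peval f.2 x = None).
Definition frac_eqv n (f f' : frac n) : Prop :=
  forall x, tmul (peval f.1 x) (peval f'.2 x) = tmul (peval f'.1 x) (peval f.2 x).
Definition frac_add n (f f' : frac n) : frac n :=
  (padd (pmul f.1 f'.2) (pmul f'.1 f.2), pmul f.2 f'.2).
Definition frac_mul n (f f' : frac n) : frac n :=
  (pmul f.1 f'.1, pmul f.2 f'.2).
Definition frac_cst n (t : T) : frac n :=
  ([:: (t, fun _ => 0%N)], [:: (Some 0%R, fun _ => 0%N)]).

Definition TratFun (n : nat) : Talg :=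
  {| car := frac n; ok := @frac_ok n; eqv := @frac_eqv n;
     alg_add := @frac_add n; alg_mul := @frac_mul n; alg_cst := @frac_cst n |}.

(* A finite multigraph (loops and multiple edges allowed) with vertex *)
(* type V and edge type E; edge e goes from src e to tgt e, and is    *)
(* identified with [0, len e] (parameter t = distance from src e).    *)
(* len e = None means length oo; then tgt e must be a leaf and it is   *)
(* the point at infinity, the edge being [0, oo].                     *)
Record curve (V E : finType) := {
  src : E -> V;
  tgt : E -> V;
  len : E -> option R
}.

Definition adjacent (V E : finType) (G : curve V E) : rel V :=
  fun a b => [exists e, ((src G e == a) && (tgt G e == b))
                     || ((src G e == b) && (tgt G e == a))].

Definition degree (V E : finType) (G : curve V E) (w : V) : nat :=
  (#|[pred e | src G e == w]| + #|[pred e | tgt G e == w]|)%N.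

Definition is_tropical_curve (V E : finType) (G : curve V E) : Prop :=
  (0 < #|V|)%N /\
  (forall a b, connect (adjacent G) a b) /\
  (forall e l, len G e = Some l -> (0 < l)%R) /\
  (forall e, len G e = None -> degree G (tgt G e) = 1%N).

Definition at_infinity (V E : finType) (G : curve V E) (w : V) : Prop :=
  exists e, len G e = None /\ tgt G e = w.

Definition pw_affine (a b : R) (f : R -> R) : Prop :=
  exists (k : nat) (pt : nat -> R) (s : nat -> Z) (c : nat -> R),
    pt 0%N = a /\ pt k = b /\
    (forall i, (i < k)%N -> (pt i < pt i.+1)%R) /\
    (forall i t, (i < k)%N -> (pt i <= t <= pt i.+1)%R ->
        f t = (c i + IZR (s i) * t)%R).

(* Candidate rational functions on Gamma: either the constant -oo, or
   the data of the (real) values at the vertices that are not points at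
   infinity and of the (real) values along each edge, t |-> fe e t for
   t in [0, len e] (resp. [0, oo)).  The value at a point at infinity
   is forced by continuity (the limit along its edge, in R u {+-oo}),
   so it is not stored. *)
Inductive ratfun (V E : finType) :=
  | RNinf
  | RFun of (V -> R) & (E -> R -> R).
Arguments RNinf {V E}.
Arguments RFun {V E}.

Definition is_rat (V E : finType) (G : curve V E) (f : ratfun V E) : Prop :=
  match f with
  | RNinf => True
  | RFun fv fe =>
      (forall e, fe e 0%R = fv (src G e)) /\
      (forall e l, len G e = Some l -> fe e l = fv (tgt G e) /\ pw_affine 0 l (fe e)) /\
      (forall e, len G e = None ->
         exists L, (0 <= L)%R /\ pw_affine 0 L (fe e) /\
           exists (s : Z) (c : R), forall t, (L <= t)%R -> fe e t = (c + IZR s * t)%R)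
  end.

Definition rat_eqv (V E : finType) (G : curve V E) (f g : ratfun V E) : Prop :=
  match f, g with
  | RNinf, RNinf => True
  | RFun fv fe, RFun gv ge =>
      (forall w, ~ at_infinity G w -> fv w = gv w) /\
      (forall e t, (0 <= t)%R -> (forall l, len G e = Some l -> (t <= l)%R) ->
         fe e t = ge e t)
  | _, _ => False
  end.

Definition rat_add (V E : finType) (f g : ratfun V E) : ratfun V E :=
  match f, g with
  | RNinf, _ => g
  | _, RNinf => f
  | RFun fv fe, RFun gv ge =>
      RFun (fun w => Rmax (fv w) (gv w)) (fun e t => Rmax (fe e t) (ge e t))
  end.

Definition rat_mul (V E : finType) (f g : ratfun V E) : ratfun V E :=
  match f, g with
  | RFun fv fe, RFun gv ge =>
      RFun (fun w => (fv w + gv w)%R) (fun e t => (fe e t + ge e t)%R)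
  | _, _ => RNinf
  end.

Definition rat_cst (V E : finType) (t : T) : ratfun V E :=
  match t with
  | None => RNinf
  | Some r => RFun (fun _ => r) (fun _ _ => r)
  end.

Definition Rat (V E : finType) (G : curve V E) : Talg :=
  {| car := ratfun V E; ok := @is_rat V E G; eqv := @rat_eqv V E G;
     alg_add := @rat_add V E; alg_mul := @rat_mul V E; alg_cst := @rat_cst V E |}.

(* Write F_k = (X^(k+1) Y (+) Y^2 (+) X^(2k+1)) / (Y^2 (+) X^(2k+1)) in bar T(X_1, ..., X_n),
   with X = X_1 and Y = X_2.  As a function, F_k >= 0 and F_k > 0 exactly on the open cone
   k x < y < (k+1) x, where it is unbounded.  These cones are pairwise disjoint, so
   min(F_i, F_j) = 0, i.e. F_i F_j = F_i (+) F_j, for i <> j; a T-algebra isomorphism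
   preserves this identity and unboundedness.  In Rat(Gamma), a function not bounded above
   by a constant is eventually positive along some leg of infinite length, and two functions
   with min(f, g) = 0 cannot both be eventually positive along the same leg.  So Rat(Gamma)
   has at most #E such functions: only the finiteness of the edge set is used. *)

From HB Require Import structures.
From Stdlib Require Import Reals Lra Lia Classical.
From mathcomp Require Import ssreflect ssrfun ssrbool eqtype ssrnat seq fintype bigop.
Set Implicit Arguments.
Unset Strict Implicit.
Unset Printing Implicit Defensive.
Local Open Scope R_scope.

Ltac tropical :=
  repeat match goal with a : T |- _ => case: a => [?|] end; rewrite /= ?/Rmax;
  repeat case: Rle_dec; intros; try f_equal; lra.

Lemma tmulA : associative tmul. Proof. by move=> a b c; tropical. Qed.
Lemma tmulC : commutative tmul. Proof. by move=> a b; tropical. Qed.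
Lemma tmul1l : left_id (Some 0) tmul. Proof. by move=> a; tropical. Qed.
Lemma tmul0r : right_zero None tmul. Proof. by move=> a; tropical. Qed.
Lemma taddA : associative tadd. Proof. by move=> a b c; tropical. Qed.
Lemma taddC : commutative tadd. Proof. by move=> a b; tropical. Qed.
Lemma tmulDl : left_distributive tmul tadd. Proof. by move=> a b c; tropical. Qed.
Lemma tmulDr : right_distributive tmul tadd. Proof. by move=> a b c; tropical. Qed.

HB.instance Definition _ := Monoid.isComLaw.Build T (Some 0) tmul tmulA tmulC tmul1l.
HB.instance Definition _ := Monoid.isMulLaw.Build T None tmul (fun _ => erefl) tmul0r.
HB.instance Definition _ := Monoid.isComLaw.Build T None tadd taddA taddC (fun _ => erefl).
HB.instance Definition _ := Monoid.isAddLaw.Build T tmul tadd tmulDl tmulDr.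

Lemma tpow_Some r k : tpow (Some r) k = Some (INR k * r).
Proof. by case: k => [|k] //=; rewrite Rmult_0_l. Qed.

Lemma tadd_Some r s : tadd (Some r) (Some s) = Some (Rmax r s).
Proof. by []. Qed.

Lemma tpow0 a : tpow a 0 = Some 0.
Proof. by []. Qed.

Lemma tpowD a k l : tpow a (k + l) = tmul (tpow a k) (tpow a l).
Proof.
case: a => [r|]; first by rewrite !tpow_Some /= plus_INR Rmult_plus_distr_r.
by case: k l => [|k] [|l]; rewrite ?addn0 //= Rplus_0_l.
Qed.

Definition origin {n : nat} : 'I_n -> T := fun _ => Some 0.

Section Evaluation.
Variable n : nat.
Implicit Types (m : monom n) (p q : tpoly n) (x : 'I_n -> T).

Lemma meval_big m x :
  meval m x = tmul m.1 (\big[tmul/Some 0]_(j <- enum 'I_n) tpow (x j) (m.2 j)).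
Proof.
rewrite /meval; elim: (enum 'I_n) => [|j s IH] /=; first by rewrite big_nil Monoid.mulm1.
by rewrite big_cons IH Monoid.mulmCA.
Qed.

Lemma peval_cons m p x : peval (m :: p) x = tadd (meval m x) (peval p x).
Proof. by []. Qed.

Lemma peval_big p x : peval p x = \big[tadd/None]_(m <- p) meval m x.
Proof. by elim: p => [|m p IH] /=; rewrite ?big_nil ?big_cons ?IH. Qed.

Lemma meval_mul m m' x :
  meval (tmul m.1 m'.1, fun j => (m.2 j + m'.2 j)%N) x = tmul (meval m x) (meval m' x).
Proof.
rewrite !meval_big /=; under eq_bigr do rewrite tpowD.
by rewrite big_split Monoid.mulmACA.
Qed.

Lemma peval_padd p q x : peval (padd p q) x = tadd (peval p x) (peval q x).
Proof. by rewrite !peval_big big_cat. Qed.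

Lemma peval_pmul p q x : peval (pmul p q) x = tmul (peval p x) (peval q x).
Proof.
rewrite !peval_big big_allpairs_dep big_distrlr.
by apply: eq_bigr => m _; apply: eq_bigr => m' _; rewrite meval_mul.
Qed.

Lemma peval_const c x : peval [:: (c, fun _ => 0%N)] x = c.
Proof. by rewrite peval_big big_seq1 meval_big big1_seq ?Monoid.mulm1. Qed.

Lemma meval_origin m : meval m origin = m.1.
Proof.
rewrite meval_big big1_seq ?Monoid.mulm1 // => j _.
by rewrite /origin tpow_Some Rmult_0_r.
Qed.

Lemma tadd_eq_None a b : tadd a b = None -> a = None /\ b = None.
Proof. by case: a; case: b. Qed.

Lemma peval_origin_None p x : peval p origin = None -> peval p x = None.
Proof.
elim: p => //= m p IH /tadd_eq_None [hm /IH ->].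
by rewrite meval_big -meval_origin hm.
Qed.
End Evaluation.

Section FractionDomain.
Variable n : nat.
Implicit Types (f : frac n) (p : tpoly n).

Lemma frac_okE f : frac_ok f <-> peval f.2 origin <> None.
Proof.
split=> [hf h0 | h0 h]; last exact/h0/h.
by apply: hf => x; apply: peval_origin_None.
Qed.

Lemma frac_ok_pmul_den f f' p : frac_ok f -> frac_ok f' -> frac_ok (p, pmul f.2 f'.2).
Proof.
rewrite !frac_okE /= peval_pmul.
by case: (peval f.2 _) => // r _; case: (peval f'.2 _).
Qed.

Lemma frac_ok_add f f' : frac_ok f -> frac_ok f' -> frac_ok (frac_add f f').
Proof. exact: frac_ok_pmul_den. Qed.

Lemma frac_ok_mul f f' : frac_ok f -> frac_ok f' -> frac_ok (frac_mul f f').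
Proof. exact: frac_ok_pmul_den. Qed.

Lemma frac_ok_cst t : frac_ok (frac_cst n t).
Proof. by rewrite frac_okE peval_const. Qed.
End FractionDomain.

(* For nonnegative x and y, [x y = x (+) y] says min(x, y) = 0. *)
Definition unbounded_orthogonal_family (A : Talg) (F : nat -> car A) : Prop :=
  [/\ forall k, ok (F k),
      forall i j, i <> j -> eqv (alg_mul (F i) (F j)) (alg_add (F i) (F j)) &
      forall k c, ~ eqv (alg_add (F k) (alg_cst A (Some c))) (alg_cst A (Some c))].

Section IsoTransfer.
Variables A B : Talg.
Hypothesis ok_addA : forall x y : car A, ok x -> ok y -> ok (alg_add x y).
Hypothesis ok_mulA : forall x y : car A, ok x -> ok y -> ok (alg_mul x y).
Hypothesis ok_cstA : forall t, ok (alg_cst A t).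
Hypothesis eqv_symB : forall x y : car B, eqv x y -> eqv y x.
Hypothesis eqv_transB : forall x y z : car B, eqv x y -> eqv y z -> eqv x z.
Hypothesis eqv_addrB : forall x y z : car B, eqv y z -> eqv (alg_add x y) (alg_add x z).

Lemma iso_unbounded_orthogonal_family (F : nat -> car A) :
  Talg_iso A B -> unbounded_orthogonal_family F ->
  exists F' : nat -> car B, unbounded_orthogonal_family F'.
Proof.
case=> phi [phi_ok [phi_eqv [_ [phi_add [phi_mul phi_cst]]]]] [okF orthF unbF].
exists (phi \o F); split=> [k | i j ij | k c hc] /=; first exact: phi_ok.
- apply: eqv_transB (eqv_symB (phi_mul _ _ (okF i) (okF j))) _.
  apply: eqv_transB (phi_add _ _ (okF i) (okF j)).
  by apply/phi_eqv; [apply: ok_mulA | apply: ok_addA | apply: orthF].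
- apply: (unbF k c); apply/phi_eqv; [exact/ok_addA | exact: ok_cstA |].
  apply: eqv_transB (phi_add _ _ (okF k) (ok_cstA _)) _.
  apply: eqv_transB (eqv_addrB _ (phi_cst _)) _.
  exact: eqv_transB hc (eqv_symB (phi_cst _)).
Qed.
End IsoTransfer.

Definition sector_den_val (k : nat) (u v : T) : T := tadd (tpow v 2) (tpow u (k + k).+1).
Definition sector_num_val (k : nat) (u v : T) : T := tadd (tmul (tpow u k.+1) (tpow v 1)) (sector_den_val k u v).

Lemma sector_cones_disjoint i j u v : (i < j)%N ->
  INR i.+1 * u + INR 1 * v <= Rmax (INR 2 * v) (INR (i + i).+1 * u) \/
  INR j.+1 * u + INR 1 * v <= Rmax (INR 2 * v) (INR (j + j).+1 * u).
Proof.
move=> /leP /le_INR; have := pos_INR i; rewrite !S_INR !plus_INR /= /Rmax => i0 ij.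
by repeat case: Rle_dec; intros; try ((left + right); lra); nra.
Qed.

Lemma sector_num_val_eq_sector_den_val i j u v : i <> j ->
  sector_num_val i u v = sector_den_val i u v \/ sector_num_val j u v = sector_den_val j u v.
Proof.
wlog ij : i j / (i < j)%N => [wlog_ij | _].
  move=> nij; have /orP [ij | ji] : (i < j)%N || (j < i)%N by rewrite -neq_ltn; apply/eqP.
    exact: wlog_ij.
  by case: (wlog_ij j i ji (nesym nij)); [right | left].
case: u => [u|]; last by left.
case: v => [v|]; last by left; rewrite /sector_num_val tmul0r.
rewrite /sector_num_val /sector_den_val !tpow_Some.
by case: (sector_cones_disjoint u v ij) => h; [left | right]; rewrite !tadd_Some Rmax_right.
Qed.

Lemma tfrac_mul_eq_add a b s t : tadd s a = a \/ tadd t b = b ->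
  let N := tadd s a in let M := tadd t b in
  tmul (tmul N M) (tmul a b) = tmul (tadd (tmul N b) (tmul M a)) (tmul a b).
Proof. by case=> -> /=; tropical. Qed.

Section SectorFamily.
Variables (n : nat) (X Y : 'I_n).

Definition xy_monom (a b : nat) : monom n :=
  (Some 0, fun j => ((if j == X then a else 0) + (if j == Y then b else 0))%N).

Lemma big_tpow_delta (x : 'I_n -> T) (j0 : 'I_n) a :
  \big[tmul/Some 0]_(j <- enum 'I_n) tpow (x j) (if j == j0 then a else 0%N) = tpow (x j0) a.
Proof.
by rewrite big_enum (bigD1 j0) //= eqxx big1 ?Monoid.mulm1 // => j /negbTE ->.
Qed.

Lemma meval_xy_monom a b x : meval (xy_monom a b) x = tmul (tpow (x X) a) (tpow (x Y) b).
Proof.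
rewrite meval_big; under eq_bigr do rewrite tpowD.
by rewrite big_split !big_tpow_delta Monoid.mul1m.
Qed.

Definition sector_den k : tpoly n := [:: xy_monom 0 2; xy_monom (k + k).+1 0].
Definition sector_num k : tpoly n := xy_monom k.+1 1 :: sector_den k.
Definition sector_frac k : frac n := (sector_num k, sector_den k).

Lemma peval_sector_den k x : peval (sector_den k) x = sector_den_val k (x X) (x Y).
Proof. by rewrite /= !meval_xy_monom !tpow0 !Monoid.mul1m !Monoid.mulm1. Qed.

Lemma peval_sector_num k x : peval (sector_num k) x = sector_num_val k (x X) (x Y).
Proof. by rewrite peval_cons peval_sector_den meval_xy_monom. Qed.

Lemma sector_frac_ok k : frac_ok (sector_frac k).
Proof. by rewrite frac_okE peval_sector_den /sector_den_val !tpow_Some. Qed.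

Lemma sector_frac_orthogonal i j : i <> j ->
  frac_eqv (frac_mul (sector_frac i) (sector_frac j)) (frac_add (sector_frac i) (sector_frac j)).
Proof.
move=> ij x; rewrite /frac_mul /frac_add peval_padd !peval_pmul !peval_sector_num !peval_sector_den.
exact/tfrac_mul_eq_add/sector_num_val_eq_sector_den_val.
Qed.

Hypothesis XY : X != Y.

Lemma sector_frac_unbounded k c :
  ~ frac_eqv (frac_add (sector_frac k) (frac_cst n (Some c))) (frac_cst n (Some c)).
Proof.
(* At (u, (k + 1/2) u) the fraction F_k takes the value u/2 = |c| + 1 > c. *)
pose u := 2 * Rabs c + 2; pose v := (INR k + /2) * u.
pose x j := if j == X then Some u else Some v.
have [xX xY] : x X = Some u /\ x Y = Some v by rewrite /x eqxx eq_sym (negbTE XY).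
move=> /(_ x); rewrite /frac_add peval_padd !peval_pmul !peval_const.
rewrite peval_sector_num peval_sector_den xX xY /sector_num_val /sector_den_val !tpow_Some !Monoid.mulm1.
rewrite !tadd_Some.
have -> : INR 2 * v = INR (k + k).+1 * u by rewrite /v !S_INR plus_INR /=; field.
have -> : INR k.+1 * u + INR 1 * v = INR (k + k).+1 * u + u / 2.
  by rewrite /v !S_INR plus_INR /=; field.
have hu : u / 2 = Rabs c + 1 by rewrite /u; field.
case; have := Rle_abs c; rewrite /Rmax; repeat case: Rle_dec; lra.
Qed.
End SectorFamily.

Lemma TratFun_unbounded_orthogonal_family n (X Y : 'I_n) :
  X != Y -> @unbounded_orthogonal_family (TratFun n) (sector_frac X Y).
Proof.
split; [exact: sector_frac_ok | exact: sector_frac_orthogonal | exact: sector_frac_unbounded].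
Qed.

Lemma finite_upper_bound (I : finType) (b : I -> R) : exists M, forall i, b i <= M.
Proof.
suff [M bM] : exists M, forall i, i \in enum I -> b i <= M.
  by exists M => i; apply: bM; rewrite mem_enum.
elim: (enum I) => [|i s [M bM]]; first by exists 0.
exists (Rmax (b i) M) => j; rewrite in_cons => /orP [/eqP -> | /bM bjM].
  exact: Rmax_l.
exact: Rle_trans bjM (Rmax_r _ _).
Qed.

Lemma pw_affine_bounded a b f : pw_affine a b f -> exists M, forall t, a <= t <= b -> f t <= M.
Proof.
case=> k [pt [s [c [<- [<- [pt_incr f_affine]]]]]].
suff : forall m, (m <= k)%N -> exists M, forall t, pt 0%N <= t <= pt m -> f t <= M.
  by apply.
elim=> [|m IH] mk.
  by exists (f (pt 0%N)) => t [t0 t0']; rewrite (Rle_antisym _ _ t0' t0); apply: Rle_refl.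
have [M fM] := IH (ltnW mk).
exists (Rmax M (Rmax (c m + IZR (s m) * pt m) (c m + IZR (s m) * pt m.+1))) => t ht.
case: (Rle_dec t (pt m)) => tm.
  by apply: Rle_trans (Rmax_l _ _); apply: fM; lra.
apply: Rle_trans (Rmax_r _ _); rewrite (f_affine m t mk); last lra.
have [t0 t1] := ht; move: (Rnot_le_lt _ _ tm) => {}tm.
rewrite /Rmax; case: Rle_dec => ?; case: (Rle_dec 0 (IZR (s m))) => ?; nra.
Qed.

Section RatCurve.
Variables (V E : finType) (G : curve V E).

Definition pos_leg (f : ratfun V E) (e : E) : Prop :=
  len G e = None /\
  exists fv fe, f = RFun fv fe /\ exists t0, forall t, t0 <= t -> 0 < fe e t.

Lemma rat_edge_bounded_or_pos_leg fv fe e : is_rat G (RFun fv fe) ->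
  (exists M, forall t, 0 <= t -> (forall l, len G e = Some l -> t <= l) -> fe e t <= M) \/
  pos_leg (RFun fv fe) e.
Proof.
case=> _ [fin_edge inf_edge]; case el: (len G e) => [l|].
  have [_ /pw_affine_bounded [M fM]] := fin_edge e l el.
  by left; exists M => t t0 tl; apply: fM; split; last exact: tl.
have [L [L0 [/pw_affine_bounded [M fM] [s [c tail]]]]] := inf_edge e el.
case: (Z.lt_ge_cases 0 s) => s0.
  have s1 : 1 <= IZR s by apply: IZR_le; lia.
  right; split=> //; exists fv, fe; split=> //; exists (Rmax L (Rabs c + 1)) => t.
  move=> /[dup] /(Rle_trans _ _ _ (Rmax_l _ _)) tL /(Rle_trans _ _ _ (Rmax_r _ _)) tc.
  by rewrite tail //; have := Rle_abs (- c); rewrite Rabs_Ropp; nra.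
have s0' : IZR s <= 0 by apply: IZR_le; lia.
left; exists (Rmax M (c + IZR s * L)) => t t0 _.
case: (Rle_dec t L) => tL.
  by apply: Rle_trans (Rmax_l _ _); apply: fM; lra.
by apply: Rle_trans (Rmax_r _ _); rewrite tail; nra.
Qed.

Lemma rat_eqv_sym f g : rat_eqv G f g -> rat_eqv G g f.
Proof.
case: f g => [|fv fe] [|gv ge] //= [fg_v fg_e].
by split=> [w w_fin | e t t0 tl]; [rewrite fg_v | rewrite fg_e].
Qed.

Lemma rat_eqv_trans f g h : rat_eqv G f g -> rat_eqv G g h -> rat_eqv G f h.
Proof.
case: f g h => [|fv fe] [|gv ge] [|hv he] //= [fg_v fg_e] [gh_v gh_e].
by split=> [w w_fin | e t t0 tl]; [rewrite fg_v ?gh_v | rewrite fg_e ?gh_e].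
Qed.

Lemma rat_eqv_addl f g h : rat_eqv G g h -> rat_eqv G (rat_add f g) (rat_add f h).
Proof.
case: f g h => [|fv fe] [|gv ge] [|hv he] //= [gh_v gh_e].
by split=> [w w_fin | e t t0 tl]; [rewrite gh_v | rewrite gh_e].
Qed.

Lemma rat_unbounded_pos_leg f : is_rat G f ->
  (forall c, ~ rat_eqv G (rat_add f (rat_cst V E (Some c))) (rat_cst V E (Some c))) ->
  exists e, pos_leg f e.
Proof.
case: f => [_ /(_ 0) [] // | fv fe f_rat unbounded].
apply: NNPP => no_leg.
have [ME fME] : exists M, forall e t, 0 <= t -> (forall l, len G e = Some l -> t <= l) ->
    fe e t <= M.
  have /fin_all_exists [bound fbound] : forall e, exists M, forall t, 0 <= t ->
      (forall l, len G e = Some l -> t <= l) -> fe e t <= M.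
    move=> e; case: (rat_edge_bounded_or_pos_leg e f_rat) => // leg.
    by case: no_leg; exists e.
  have [M boundM] := finite_upper_bound bound.
  by exists M => e t t0 tl; apply: Rle_trans (fbound e t t0 tl) (boundM e).
have [MV fvMV] := finite_upper_bound fv.
apply: (unbounded (Rmax ME MV)); split=> [w _ | e t t0 tl]; apply: Rmax_right.
  exact: Rle_trans (fvMV w) (Rmax_r _ _).
exact: Rle_trans (fME e t t0 tl) (Rmax_l _ _).
Qed.

Lemma pos_legs_not_orthogonal f g e : pos_leg f e -> pos_leg g e ->
  ~ rat_eqv G (rat_mul f g) (rat_add f g).
Proof.
move=> [el [fv [fe [-> [t0 f_pos]]]]] [_ [gv [ge [-> [t1 g_pos]]]]] fg.
pose t := Rmax (Rmax t0 t1) 0.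
have [ft gt] : 0 < fe e t /\ 0 < ge e t.
  split; [apply: f_pos | apply: g_pos]; apply: Rle_trans (Rmax_l _ _); [exact: Rmax_l | exact: Rmax_r].
have tl : forall l, len G e = Some l -> t <= l by rewrite el.
have [_ /(_ e t (Rmax_r _ _) tl)] := fg.
by rewrite /Rmax; case: Rle_dec; lra.
Qed.

Lemma Rat_no_unbounded_orthogonal_family (g : nat -> ratfun V E) :
  ~ @unbounded_orthogonal_family (Rat G) g.
Proof.
case=> g_rat g_orth g_unb.
have /fin_all_exists [leg gleg] : forall k : 'I_#|E|.+1, exists e, pos_leg (g k) e.
  by move=> k; exact: rat_unbounded_pos_leg (g_rat k) (g_unb k).
have /injectivePn [i [j ij legij]] : ~~ injectiveb leg.
  by apply/injectiveP => /leq_card; rewrite card_ord ltnn.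
apply: (pos_legs_not_orthogonal (gleg i)); first by rewrite legij.
by apply: g_orth => /val_inj eq_ij; rewrite eq_ij eqxx in ij.
Qed.
End RatCurve.

Theorem corollary3p13 (n : nat) (hn : (2 <= n)%N)
  (V E : finType) (G : curve V E) (hG : is_tropical_curve G) :
  ~ Talg_iso (TratFun n) (Rat G).
Proof.
move=> iso.
have XY : Ordinal (ltnW hn) != Ordinal hn by [].
have [g g_family] := iso_unbounded_orthogonal_family (A := TratFun n) (B := Rat G)
  (@frac_ok_add n) (@frac_ok_mul n) (@frac_ok_cst n)
  (@rat_eqv_sym V E G) (@rat_eqv_trans V E G) (@rat_eqv_addl V E G)
  iso (TratFun_unbounded_orthogonal_family XY).
exact: Rat_no_unbounded_orthogonal_family g_family.
Qed.
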